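(* Let $A\in\mathbb{C}^{n\times n}$, and fix $A^-\in A\{1\}$ and $A^{GD}\in A\{GD\}$. For $X\in\mathbb{C}^{n\times n}$ the following are equivalent: (i) $X = A^{-}AA^{GD}$; (ii) $AX = AA^{GD}$ and $R(X)=R(A^{-}A)$; (iii) $A^{GD}AX = A^{GD}AA^{GD}$ and $R(X)=R(A^{-}A)$.
   Context: For $A\in\mathbb{C}^{n\times n}$, $ind(A)$ is the smallest nonnegative integer $k$ with $\mathrm{rank}(A^k)=\mathrm{rank}(A^{k+1})$. $A\{1\}$ is the set of matrices $X$ with $AXA=A$. With $k=ind(A)$, $A\{GD\}$ is the set of G-Drazin inverses of $A$: matrices $X$ with $AXA=A$, $XA^{k+1}=A^k$, $A^{k+1}X=A^k$. $R(\cdot)$ denotes range. The matrix $A^-AA^{GD}$ is called the 1GD inverse of $A$ associated with $A^-$ and $A^{GD}$. *)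

From HB Require Import structures.
From mathcomp Require Import all_boot all_order all_algebra.
Set Implicit Arguments. Unset Strict Implicit. Unset Printing Implicit Defensive.
Import Order.TTheory GRing.Theory.
Local Open Scope ring_scope.

(* Range (column space) R(A) of a matrix, represented canonically as the
   row space of A^T (genmx gives a canonical representative, so
   mxrange A = mxrange B  <->  R(A) = R(B)). *)
Definition mxrange (F : fieldType) (m n : nat) (A : 'M[F]_(m, n)) : 'M[F]_m :=
  (<< A^T >>)%MS.

Lemma mxindex_ex (F : fieldType) (n : nat) (A : 'M[F]_n) :
  exists k, \rank (A ^+ k) == \rank (A ^+ k.+1).
Proof.
have key : forall k, (forall j, (j < k)%N -> \rank (A ^+ j) != \rank (A ^+ j.+1)) ->
  (\rank (A ^+ k) + k <= n)%N.
  elim=> [|k IH] H; first by rewrite addn0 rank_leq_row.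
  have le : (\rank (A ^+ k.+1) <= \rank (A ^+ k))%N.
    by rewrite exprSr mxrankM_maxl.
  have ne := H k (ltnSn k).
  have lt : (\rank (A ^+ k.+1) < \rank (A ^+ k))%N by rewrite ltn_neqAle eq_sym ne le.
  have := IH (fun j hj => H j (ltnW hj)).
  rewrite addnS; apply: leq_trans; rewrite ltn_add2r //.
case: (boolP [exists j : 'I_n.+1, \rank (A ^+ j) == \rank (A ^+ j.+1)]).
  by case/existsP=> j hj; exists j.
move/existsPn=> H; exfalso.
have := key n.+1 (fun j hj => H (Ordinal hj)).
by rewrite addnS ltnNge leq_addl.
Qed.

Definition mxind (F : fieldType) (n : nat) (A : 'M[F]_n) : nat :=
  ex_minn (mxindex_ex A).

Definition inv1 (F : fieldType) (n : nat) (A X : 'M[F]_n) : Prop :=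
  A *m X *m A = A.

Definition invGD (F : fieldType) (n : nat) (A X : 'M[F]_n) : Prop :=
  let k := mxind A in
  [/\ A *m X *m A = A, X *m A ^+ k.+1 = A ^+ k & A ^+ k.+1 *m X = A ^+ k].

From HB Require Import structures.
From mathcomp Require Import all_boot all_order all_algebra.
Import GRing.Theory.
Set Implicit Arguments. Unset Strict Implicit.
Local Open Scope ring_scope.

(* If
   R(X) = R(A^- A) then X = A^- A W for some W, and A A^- A = A gives
   X = A^- A X, so X is determined by AX; and AX = A A^GD follows from
   A^GD A X = A^GD A A^GD by multiplying on the left by A. *)

Section InnerInverse.

Variable F : fieldType.

Lemma trmx_submxP (m p q : nat) (X : 'M[F]_(m, p)) (Y : 'M[F]_(m, q)) :
  reflect (exists W : 'M_(q, p), X = Y *m W) (X^T <= Y^T)%MS.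
Proof.
apply: (iffP submxP) => [[D HD] | [W ->]].
  by exists D^T; rewrite -[X]trmxK HD trmx_mul trmxK.
by exists W^T; rewrite trmx_mul.
Qed.

Lemma mxrange_eqP (m p q : nat) (X : 'M[F]_(m, p)) (Y : 'M[F]_(m, q)) :
  reflect (mxrange X = mxrange Y) (X^T == Y^T)%MS.
Proof. exact: genmxP. Qed.

Variables (m n : nat) (A : 'M[F]_(m, n)).

Lemma mxrange_mul_inner (G : 'M_(n, m)) (k : nat) (M : 'M_(k, m)) :
  A *m G *m A = A -> mxrange (M *m A *m G) = mxrange (M *m A).
Proof.
move=> AGA; apply/mxrange_eqP/andP; split; apply/trmx_submxP.
  by exists G.
by exists A; rewrite -!mulmxA (mulmxA A G) AGA.
Qed.

Lemma inner_range_fixed (Am : 'M_(n, m)) (p : nat) (X : 'M_(n, p)) :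
  A *m Am *m A = A -> (X^T <= (Am *m A)^T)%MS -> Am *m A *m X = X.
Proof.
move=> AAmA /trmx_submxP [W ->].
by rewrite !mulmxA -(mulmxA Am A Am) -(mulmxA Am (A *m Am)) AAmA.
Qed.

Lemma mul_inner_cancel (G : 'M_(n, m)) (p : nat) (X Y : 'M_(n, p)) :
  A *m G *m A = A -> G *m A *m X = G *m A *m Y -> A *m X = A *m Y.
Proof. by move=> AGA GAXY; rewrite -AGA -!mulmxA (mulmxA G) GAXY !mulmxA. Qed.

End InnerInverse.

Theorem theorem3p5 (F : fieldType) (n : nat) (A Am Agd X : 'M[F]_n) :
  inv1 A Am -> invGD A Agd ->
  [<-> X = Am *m A *m Agd;
       A *m X = A *m Agd /\ mxrange X = mxrange (Am *m A);
       Agd *m A *m X = Agd *m A *m Agd /\ mxrange X = mxrange (Am *m A)].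
Proof.
rewrite /inv1 => AAmA [AAgdA _ _].
tfae.
- move=> ->; split; first by rewrite !mulmxA AAmA.
  exact: mxrange_mul_inner.
- by case=> AX rangeX; split=> //; rewrite -!mulmxA AX.
- case=> /(mul_inner_cancel AAgdA) AX /mxrange_eqP /andP [subX _].
  by rewrite -(inner_range_fixed AAmA subX) -mulmxA AX mulmxA.
Qed.
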